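(* Let $f,g$ satisfy the standing assumptions below. Suppose $\beta\ge\frac{4Q_gM_f}{\mu^3}$ and $\hat\beta\ge\beta\max\{\frac{8L_g^2}{\mu},\frac1{4\mu},\frac\mu4\}$. Then for any $(x,y)\in\mathbb{R}^n\times\mathbb{R}^p$ and any $w\in\hat{\mathcal{D}}_s(x,y)$, $\sup_{z\in\mathcal{D}_h(x,y)}\langle w,z\rangle\ge\min\{\frac14,\frac{\beta^2}{16\hat\beta^2}\}\|w\|^2$.
   Context: Standing assumptions. (A1) Constants $M_f,\mu,L_g,Q_g>0$ exist such that: $f:\mathbb{R}^n\times\mathbb{R}^p\to\mathbb{R}$ is $M_f$-Lipschitz; $g$ is twice differentiable with $\nabla^2_{yy}g\succeq\mu I_p$; $\nabla g$ is $L_g$-Lipschitz; $\nabla^2_{yy}g,\nabla^2_{xy}g$ are $Q_g$-Lipschitz; $\nabla^2_{yy}g$ is continuously differentiable ($\nabla^2_{xy}g\in\mathbb{R}^{n\times p}$ has entries $\partial^2g/\partial x_i\partial y_j$). (A2) $f$ is a potential function of a conservative field $\mathcal{D}_f$ with compact convex values of norm at most $M_f$. Notation (all at $(x,y)$): $H=\nabla^2_{yy}g$; $\mathcal{A}(x,y):=y-H^{-1}\nabla_yg$; $\nabla^3_{xyy}g(x,y)[d]:=\lim_{t\to0}\frac1t(\nabla^2_{xy}g(x,y+td)-\nabla^2_{xy}g(x,y))$, $\nabla^3_{yyy}g(x,y)[d]:=\lim_{t\to0}\frac1t(\nabla^2_{yy}g(x,y+td)-\nabla^2_{yy}g(x,y))$;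 $J_{A,x}:=-\nabla^2_{xy}gH^{-1}+\nabla^3_{xyy}g[H^{-1}\nabla_yg]H^{-1}$, $J_{A,y}:=\nabla^3_{yyy}g[H^{-1}\nabla_yg]H^{-1}$; $\mathcal{D}_h(x,y):=\{(d_x+J_{A,x}d_y+\beta\nabla^2_{xy}g\nabla_yg,\ J_{A,y}d_y+\beta H\nabla_yg):(d_x,d_y)\in\mathcal{D}_f(x,\mathcal{A}(x,y))\}$; $\hat{\mathcal{D}}_s(x,y):=\{(d_x-\nabla^2_{xy}gH^{-1}d_y,\ \hat\beta\nabla_yg):(d_x,d_y)\in\mathcal{D}_f(x,\mathcal{A}(x,y))\}$. *)

From mathcomp Require Import all_boot all_order all_algebra.
From mathcomp Require Import all_classical all_reals all_analysis.
Import Order.TTheory GRing.Theory Num.Theory.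
Import numFieldNormedType.Exports.

Set Implicit Arguments.
Unset Strict Implicit.
Unset Printing Implicit Defensive.

Local Open Scope ring_scope.
Local Open Scope classical_set_scope.

Section Defs.
Variables (R : realType) (n p : nat).

Notation E := ('cV[R]_n * 'cV[R]_p)%type.

Definition dotv (m : nat) (u v : 'cV[R]_m) : R := \sum_(i < m) u i 0 * v i 0.
Definition enorm (m : nat) (u : 'cV[R]_m) : R := Num.sqrt (dotv u u).

Definition dotp (w z : E) : R := dotv w.1 z.1 + dotv w.2 z.2.
Definition enormp (w : E) : R := Num.sqrt (dotp w w).

Definition opnorm (m k : nat) (A : 'M[R]_(m, k)) : R :=
  sup [set enorm (A *m v) | v in [set v : 'cV[R]_k | enorm v <= 1]].

Definition gradx (g : E -> R) (z : E) : 'cV[R]_n :=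
  \col_(i < n) 'D_((delta_mx i 0 : 'cV[R]_n), (0 : 'cV[R]_p)) g z.
Definition grady (g : E -> R) (z : E) : 'cV[R]_p :=
  \col_(j < p) 'D_((0 : 'cV[R]_n), (delta_mx j 0 : 'cV[R]_p)) g z.
Definition grad (g : E -> R) (z : E) : E := (gradx g z, grady g z).

Definition hessyy (g : E -> R) (z : E) : 'M[R]_p :=
  \matrix_(i < p, j < p)
    'D_((0 : 'cV[R]_n), (delta_mx j 0 : 'cV[R]_p)) (fun z' => grady g z' i 0) z.
Definition hessxy (g : E -> R) (z : E) : 'M[R]_(n, p) :=
  \matrix_(i < n, j < p)
    'D_((delta_mx i 0 : 'cV[R]_n), (0 : 'cV[R]_p)) (fun z' => grady g z' j 0) z.

Definition d3xyy (g : E -> R) (z : E) (d : 'cV[R]_p) : 'M[R]_(n, p) :=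
  'D_((0 : 'cV[R]_n), d) (hessxy g) z.
Definition d3yyy (g : E -> R) (z : E) (d : 'cV[R]_p) : 'M[R]_p :=
  'D_((0 : 'cV[R]_n), d) (hessyy g) z.

Definition Amap (g : E -> R) (x : 'cV[R]_n) (y : 'cV[R]_p) : 'cV[R]_p :=
  y - invmx (hessyy g (x, y)) *m grady g (x, y).

Definition JAx (g : E -> R) (x : 'cV[R]_n) (y : 'cV[R]_p) : 'M[R]_(n, p) :=
  let z := (x, y) in
  let Hi := invmx (hessyy g z) in
  - (hessxy g z *m Hi) + d3xyy g z (Hi *m grady g z) *m Hi.

Definition JAy (g : E -> R) (x : 'cV[R]_n) (y : 'cV[R]_p) : 'M[R]_p :=
  let z := (x, y) in
  let Hi := invmx (hessyy g z) in
  d3yyy g z (Hi *m grady g z) *m Hi.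

Definition Dh (g : E -> R) (Df : E -> set E) (beta : R)
    (x : 'cV[R]_n) (y : 'cV[R]_p) : set E :=
  [set (d.1 + JAx g x y *m d.2 + beta *: (hessxy g (x, y) *m grady g (x, y)),
        JAy g x y *m d.2 + beta *: (hessyy g (x, y) *m grady g (x, y)))
   | d in Df (x, Amap g x y)].

Definition Dshat (g : E -> R) (Df : E -> set E) (betahat : R)
    (x : 'cV[R]_n) (y : 'cV[R]_p) : set E :=
  [set (d.1 - hessxy g (x, y) *m invmx (hessyy g (x, y)) *m d.2,
        betahat *: grady g (x, y))
   | d in Df (x, Amap g x y)].

Definition abs_cont_curve (gam : R -> E) : Prop :=
  forall eps : R, 0 < eps -> exists2 delta : R, 0 < delta &
    forall (N : nat) (a b : nat -> R),
      (forall k, (k < N)%N -> 0 <= a k <= b k /\ b k <= 1) ->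
      (forall k l, (k < l)%N -> (l < N)%N -> b k <= a l) ->
      \sum_(k < N) (b k - a k) < delta ->
      \sum_(k < N) enormp (gam (b k) - gam (a k)) < eps.

(* D is a conservative field (nonempty compact values, closed graph) and f is
   a potential of D: along every absolutely continuous curve, for almost
   every t, d/dt f(gam t) = <v, gam'(t)> for all v in D(gam t). *)
Definition conservative_potential (D : E -> set E) (f : E -> R) : Prop :=
  (forall z, D z !=set0) /\
  (forall z, compact (D z)) /\
  closed [set zv : E * E | D zv.1 zv.2] /\
  (forall gam : R -> E, abs_cont_curve gam ->
     exists N : set R, (@lebesgue_measure R).-negligible N /\
       forall t, 0 < t < 1 -> ~ N t ->
         derivable (f \o gam) t 1 /\ derivable gam t 1 /\
         forall v, D (gam t) v -> (f \o gam)^`() t = dotp v (gam^`() t)).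

End Defs.

From mathcomp Require Import all_boot all_order all_algebra.
From mathcomp Require Import all_classical all_reals all_analysis.
From mathcomp Require Import ring lra.
Import Order.TTheory GRing.Theory Num.Theory.
Import numFieldNormedType.Exports.

Set Implicit Arguments.
Unset Strict Implicit.
Unset Printing Implicit Defensive.

Local Open Scope ring_scope.
Local Open Scope classical_set_scope.

(** Pair w = (a, betahat * grad_y g), with a = d_x - grad2_xy g H^-1 d_y, against
    the element z of D_h built from the same d in D_f(x, A(x, y)).  Since
    d_x + J_{A,x} d_y = a + grad3_xyy g[v] u with u = H^-1 d_y, v = H^-1 grad_y g,
      <w, z> = |a|^2 + <a, grad3_xyy g[v] u> + beta <a, grad2_xy g grad_y g>
               + betahat <grad_y g, grad3_yyy g[v] u> + beta betahat <grad_y g, H grad_y g>.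
    Strong convexity gives |H^-1 xi| <= |xi| / mu and makes the last term at least
    beta betahat mu |grad_y g|^2.  The third-order terms are directional derivatives
    of Q_g-Lipschitz Hessians, so they are bounded by Q_g |v| |u| <= Q_g M_f |grad_y g| / mu^2
    times the remaining factor, and the mixed term by L_g |a| |grad_y g|.  The
    conditions on beta and betahat make the resulting quadratic form in
    (|a|, |grad_y g|) dominate min(1/4, beta^2 / (16 betahat^2)) |w|^2. *)

Section InnerProduct.
Variables (R : realType) (m : nat).
Implicit Types (u v w : 'cV[R]_m) (c : R).

Lemma dotvE u v : dotv u v = (u^T *m v) 0 0.
Proof. by rewrite /dotv mxE; apply: eq_bigr => i _; rewrite mxE. Qed.

Lemma dotvC u v : dotv u v = dotv v u.
Proof. by apply: eq_bigr => i _; rewrite mulrC. Qed.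

Lemma dotvDr u v w : dotv u (v + w) = dotv u v + dotv u w.
Proof. by rewrite /dotv -big_split; apply: eq_bigr => i _; rewrite mxE mulrDr. Qed.

Lemma dotvZr u v c : dotv u (c *: v) = c * dotv u v.
Proof. by rewrite /dotv mulr_sumr; apply: eq_bigr => i _; rewrite mxE mulrCA. Qed.

Lemma dotvDl u v w : dotv (u + v) w = dotv u w + dotv v w.
Proof. by rewrite dotvC dotvDr !(dotvC w). Qed.

Lemma dotvZl u v c : dotv (c *: u) v = c * dotv u v.
Proof. by rewrite dotvC dotvZr dotvC. Qed.

Lemma dotvNl u v : dotv (- u) v = - dotv u v.
Proof. by rewrite -scaleN1r dotvZl mulN1r. Qed.

Lemma dotvNr u v : dotv u (- v) = - dotv u v.
Proof. by rewrite dotvC dotvNl dotvC. Qed.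

Lemma dotv0l v : dotv 0 v = 0.
Proof. by rewrite -(scale0r 0) dotvZl mul0r. Qed.

Lemma dotvv_ge0 u : 0 <= dotv u u.
Proof. by apply: sumr_ge0 => i _; rewrite -expr2 sqr_ge0. Qed.

Lemma dotvv_eq0 u : (dotv u u == 0) = (u == 0).
Proof.
apply/eqP/eqP => [uu0|->]; last exact: dotv0l.
apply/matrixP => i j; rewrite ord1 mxE.
have /eqP : u i 0 * u i 0 = 0.
  by apply: (psumr_eq0P _ uu0) => // k _; rewrite -expr2 sqr_ge0.
by rewrite mulf_eq0 orbb => /eqP.
Qed.

Lemma enorm_ge0 u : 0 <= enorm u.
Proof. exact: sqrtr_ge0. Qed.

Lemma enorm_sqr u : enorm u ^+ 2 = dotv u u.
Proof. by rewrite sqr_sqrtr // dotvv_ge0. Qed.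

Lemma enorm0 : enorm (0 : 'cV[R]_m) = 0.
Proof. by rewrite /enorm dotv0l sqrtr0. Qed.

Lemma enorm_eq0 u : (enorm u == 0) = (u == 0).
Proof. by rewrite sqrtr_eq0 le_eqVlt ltNge dotvv_ge0 orbF dotvv_eq0. Qed.

Lemma enormZ u c : enorm (c *: u) = `|c| * enorm u.
Proof. by rewrite /enorm dotvZr dotvZl mulrA -expr2 sqrtrM ?sqr_ge0 // sqrtr_sqr. Qed.

Lemma enormN u : enorm (- u) = enorm u.
Proof. by rewrite -scaleN1r enormZ normrN normr1 mul1r. Qed.

Lemma dotv_le_enorm u v : dotv u v <= enorm u * enorm v.
Proof.
have [->|u0] := eqVneq u 0; first by rewrite dotv0l mulr_ge0 ?enorm_ge0.
have [->|v0] := eqVneq v 0; first by rewrite dotvC dotv0l mulr_ge0 ?enorm_ge0.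
have su : 0 < enorm u by rewrite lt_def enorm_eq0 u0 enorm_ge0.
have sv : 0 < enorm v by rewrite lt_def enorm_eq0 v0 enorm_ge0.
have := dotvv_ge0 (enorm v *: u - enorm u *: v).
rewrite !(dotvDl, dotvDr, dotvNl, dotvNr, dotvZl, dotvZr) (dotvC v u) -!enorm_sqr.
have := mulr_gt0 su sv; nra.
Qed.

Lemma normr_dotv_le u v : `|dotv u v| <= enorm u * enorm v.
Proof.
rewrite ler_norml dotv_le_enorm andbT lerNl -dotvNl.
by rewrite -(enormN u) dotv_le_enorm.
Qed.

End InnerProduct.

Lemma dotv_mulmx (R : realType) k m (a : 'cV[R]_k) (M : 'M[R]_(k, m)) u :
  dotv a (M *m u) = dotv (M^T *m a) u.
Proof. by rewrite !dotvE trmx_mul trmxK mulmxA. Qed.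

Section ProductNorm.
Variables (R : realType) (n p : nat).
Implicit Types (w : 'cV[R]_n * 'cV[R]_p).

Lemma enormp_sqr w : enormp w ^+ 2 = enorm w.1 ^+ 2 + enorm w.2 ^+ 2.
Proof. by rewrite sqr_sqrtr ?addr_ge0 ?dotvv_ge0 // !enorm_sqr. Qed.

Lemma enorm_fst_le w : enorm w.1 <= enormp w.
Proof. by rewrite ler_sqrt ?addr_ge0 ?dotvv_ge0 // lerDl dotvv_ge0. Qed.

Lemma enorm_snd_le w : enorm w.2 <= enormp w.
Proof. by rewrite ler_sqrt ?addr_ge0 ?dotvv_ge0 // lerDr dotvv_ge0. Qed.

Lemma enormpZ w (c : R) : enormp (c *: w) = `|c| * enormp w.
Proof.
rewrite /enormp /dotp /= !dotvZr !dotvZl !mulrA -mulrDr -expr2.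
by rewrite sqrtrM ?sqr_ge0 // sqrtr_sqr.
Qed.

Lemma enormp_pair0r (a : 'cV[R]_n) : enormp (a, (0 : 'cV[R]_p)) = enorm a.
Proof. by rewrite /enormp /dotp /= dotv0l addr0. Qed.

Lemma enormp_pair0l (b : 'cV[R]_p) : enormp ((0 : 'cV[R]_n), b) = enorm b.
Proof. by rewrite /enormp /dotp /= dotv0l add0r. Qed.

Lemma dotp_affine_le w (P : 'M[R]_(n, p)) (Q : 'M[R]_p) (c d : 'cV[R]_n * 'cV[R]_p) :
  dotp w (d.1 + P *m d.2 + c.1, Q *m d.2 + c.2)
  <= (enorm w.1 + enorm (P^T *m w.1) + enorm (Q^T *m w.2)) * enormp d + dotp w c.
Proof.
have le_d (x : 'cV[R]_n) : dotv x d.1 <= enorm x * enormp d.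
  exact: le_trans (dotv_le_enorm _ _) (ler_wpM2l (enorm_ge0 _) (enorm_fst_le d)).
have le_d' (x : 'cV[R]_p) : dotv x d.2 <= enorm x * enormp d.
  exact: le_trans (dotv_le_enorm _ _) (ler_wpM2l (enorm_ge0 _) (enorm_snd_le d)).
rewrite /dotp /= !dotvDr !dotv_mulmx.
have := le_d w.1; have := le_d' (P^T *m w.1); have := le_d' (Q^T *m w.2); lra.
Qed.

End ProductNorm.

Lemma opnorm_mulmx_le (R : realType) k m (M : 'M[R]_(k, m)) (u : 'cV[R]_m) :
  enorm (M *m u) <= opnorm M * enorm u.
Proof.
pose r i := (row i M)^T.
have Mv v i : (M *m v) i 0 = dotv (r i) v.
  by rewrite mxE; apply: eq_bigr => j _; rewrite !mxE.
have Mbd : has_ubound [set enorm (M *m v) | v in [set v | enorm v <= 1]].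
  exists (Num.sqrt (\sum_i dotv (r i) (r i))) => _ [v /= v1 <-].
  rewrite ler_sqrt; last by apply: sumr_ge0 => i _; exact: dotvv_ge0.
  apply: ler_sum => i _; rewrite Mv -expr2 -enorm_sqr -real_normK ?num_real //.
  rewrite lerXn2r ?nnegrE ?normr_ge0 ?enorm_ge0 //.
  by apply: le_trans (normr_dotv_le _ _) _; rewrite ler_piMr ?enorm_ge0.
have [->|u0] := eqVneq u 0; first by rewrite mulmx0 !enorm0 mulr0.
have up : 0 < enorm u by rewrite lt_def enorm_eq0 u0 enorm_ge0.
have : enorm (M *m ((enorm u)^-1 *: u)) <= opnorm M.
  apply: (ub_le_sup Mbd); exists ((enorm u)^-1 *: u) => //=.
  by rewrite enormZ ger0_norm ?invr_ge0 ?enorm_ge0 // mulVf ?gt_eqF.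
rewrite -scalemxAr enormZ ger0_norm ?invr_ge0 ?enorm_ge0 // => /(ler_wpM2r (ltW up)).
by rewrite mulrAC mulVf ?gt_eqF // mul1r.
Qed.

Section Continuity.
Variable R : realType.

Lemma continuous_wsum (T : topologicalType) (I : finType) (c : I -> R)
    (F : I -> T -> R) :
  (forall i, continuous (F i)) -> continuous (fun t => \sum_i c i * F i t).
Proof.
move=> cF; apply: (@continuous_big _ _ +%R 0 xpredT add_continuous) => i _ t.
by apply: cvgM; [exact: cvg_cst | exact: cF].
Qed.

Lemma continuous_dotv_mulmx k m (a : 'cV[R]_k) (u : 'cV[R]_m) :
  continuous (fun M : 'M[R]_(k, m) => dotv a (M *m u)).
Proof.
have -> : (fun M : 'M[R]_(k, m) => dotv a (M *m u)) =
    (fun M => \sum_i a i 0 * \sum_j u j 0 * M i j).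
  apply: funext => M; apply: eq_bigr => i _; rewrite mxE.
  by congr (_ * _); apply: eq_bigr => j _; rewrite mulrC.
by apply: continuous_wsum => i; apply: continuous_wsum => j; exact: coord_continuous.
Qed.

Lemma continuous_snd_coord n p (j : 'I_p) :
  continuous (fun e : 'cV[R]_n * 'cV[R]_p => e.2 j 0).
Proof.
move=> e; apply: (@continuous_comp _ _ _ snd (fun M : 'cV[R]_p => M j 0)).
  exact: cvg_snd.
exact: coord_continuous.
Qed.

Lemma continuous_dotv_snd n p (b : 'cV[R]_p) :
  continuous (fun e : 'cV[R]_n * 'cV[R]_p => dotv b e.2).
Proof. by apply: continuous_wsum => j; exact: continuous_snd_coord. Qed.

End Continuity.

Section DirectionalDerivative.
Variables (R : realType) (V : normedModType R).

Lemma derive_le (W : normedModType R) (F : V -> W) (z v : V) (phi : W -> R) (C : R) :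
  derivable F z v -> continuous phi ->
  (forall h : R, h != 0 -> phi (h^-1 *: (F (h *: v + z) - F z)) <= C) ->
  phi ('D_v F z) <= C.
Proof.
move=> dF cphi hC.
have cl : closed (phi @^-1` [set r | r <= C]).
  by apply: preimage_closed; [move=> x _; exact: cphi | exact: closed_le].
apply: (@closed_cvg _ _ _ (Proper_dnbhs_numFieldType (0 : R)) _ _ cl); last exact: dF.
near=> h; apply: hC; near: h; exact: nbhs_dnbhs_neq.
Unshelve. all: by end_near.
Qed.

Lemma derive_comp_linear (W : normedModType R) (F : V -> W) (L : W -> R) (z v : V) :
  derivable F z v -> continuous L ->
  {morph L : x y / x - y} -> (forall c, {morph L : x / c *: x >-> c * x}) ->
  'D_v (L \o F) z = L ('D_v F z).
Proof.
move=> dF cL LB LZ; rewrite {1}/derive; apply: cvg_lim => //.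
have -> : (fun h : R => h^-1 *: ((L \o F \o shift z) (h *: v) - (L \o F) z)) =
    L \o (fun h : R => h^-1 *: ((F \o shift z) (h *: v) - F z)).
  by apply: funext => h /=; rewrite LZ LB.
exact: cvg_comp dF (cL _).
Qed.

(* A non-convergent limit of matrices defaults to [point], i.e. to 0. *)
Lemma derive_mx_le k m (F : V -> 'M[R]_(k, m)) (z v : V) (phi : 'M[R]_(k, m) -> R) C :
  continuous phi -> phi 0 <= C ->
  (forall h : R, h != 0 -> phi (h^-1 *: (F (h *: v + z) - F z)) <= C) ->
  phi ('D_v F z) <= C.
Proof.
move=> cphi phi0 hC; have [dF|ndF] := pselect (derivable F z v).
  exact: derive_le.
suff -> : 'D_v F z = 0 by [].
by rewrite /derive dvgP //; apply/matrixP => i j; rewrite !mxE.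
Qed.

End DirectionalDerivative.

Lemma quotient_le (R : realType) (h t C : R) : h != 0 -> `|t| <= `|h| * C -> h^-1 * t <= C.
Proof.
move=> h0 htC; apply: le_trans (ler_norm _) _.
by rewrite normrM normfV ler_pdivrMl ?normr_gt0.
Qed.

Section LipschitzDerivatives.
Variables (R : realType) (n p : nat).
Local Notation E := ('cV[R]_n * 'cV[R]_p)%type.

Lemma dotv_derive_mx_ge k m (F : E -> 'M[R]_(k, m)) (Q : R) (z : E) (v : 'cV[R]_p)
    (a : 'cV[R]_k) (u : 'cV[R]_m) (V U : R) :
  0 <= Q -> (forall z1 z2, opnorm (F z1 - F z2) <= Q * enormp (z1 - z2)) ->
  enorm v <= V -> enorm u <= U ->
  - (Q * V * (enorm a * U)) <= dotv a ('D_((0 : 'cV[R]_n), v) F z *m u).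
Proof.
move=> Q0 FL vV uU; rewrite lerNl -dotvNl.
apply: (derive_mx_le (phi := fun M => dotv (- a) (M *m u))).
- exact: continuous_dotv_mulmx.
- rewrite mul0mx dotvC dotv0l !mulr_ge0 ?enorm_ge0 //.
  + exact: le_trans (enorm_ge0 v) vV.
  + exact: le_trans (enorm_ge0 u) uU.
move=> h h0; rewrite -scalemxAl dotvZr; apply: quotient_le h0 _.
set D := F _ - F z.
have hD : opnorm D <= Q * (`|h| * enorm v).
  by have := FL (h *: ((0 : 'cV[R]_n), v) + z) z; rewrite addrK enormpZ enormp_pair0l.
have Du : enorm (D *m u) <= `|h| * (Q * V * U).
  apply: le_trans (opnorm_mulmx_le D u) _.
  apply: le_trans (ler_wpM2r (enorm_ge0 u) hD) _.
  rewrite (_ : _ * enorm u = `|h| * (Q * enorm v * enorm u)); last by ring.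
  apply: (ler_wpM2l (normr_ge0 h)).
  by apply: ler_pM; rewrite ?mulr_ge0 ?enorm_ge0 ?ler_wpM2l.
apply: le_trans (normr_dotv_le _ _) _; rewrite enormN.
rewrite (_ : `|h| * _ = enorm a * (`|h| * (Q * V * U))); last by ring.
exact: (ler_wpM2l (enorm_ge0 a) Du).
Qed.

Lemma trmx_hessxy_mulmx (g : E -> R) (z : E) (a : 'cV[R]_n) :
  differentiable (grad g) z ->
  (hessxy g z)^T *m a = ('D_(a, (0 : 'cV[R]_p)) (grad g) z).2.
Proof.
move=> dg.
have Da : 'D_(a, 0) (grad g) z = \sum_i a i 0 *: 'D_(delta_mx i 0, 0) (grad g) z.
  have -> : (a, 0) = \sum_i a i 0 *: (delta_mx i 0, 0) :> E.
    apply: injective_projections => /=.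
      rewrite (big_morph fst (id1 := 0) (op1 := +%R)) // {1}(matrix_sum_delta a).
      by apply: eq_bigr => i _; rewrite big_ord1.
    by rewrite (big_morph snd (id1 := 0) (op1 := +%R)) // big1 // => i _ /=; rewrite scaler0.
  rewrite deriveE // linear_sum; apply: eq_bigr => i _.
  by rewrite linearZ deriveE.
apply/matrixP => j k; rewrite (ord1 k) Da.
rewrite (big_morph snd (id1 := 0) (op1 := +%R)) // summxE mxE.
apply: eq_bigr => i _; rewrite !mxE /= mulrC; congr (_ * _).
have -> : (fun z' => grady g z' j 0) = (fun e : E => e.2 j 0) \o grad g by [].
rewrite derive_comp_linear //.
- exact: diff_derivable.
- exact: continuous_snd_coord.
- by move=> x y; rewrite !mxE.
- by move=> c x; rewrite !mxE.
Qed.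

Lemma dotv_hessxy_ge (g : E -> R) (z : E) (a : 'cV[R]_n) (b : 'cV[R]_p) (Lg : R) :
  differentiable (grad g) z ->
  (forall z1 z2, enormp (grad g z1 - grad g z2) <= Lg * enormp (z1 - z2)) ->
  - (Lg * enorm a * enorm b) <= dotv a (hessxy g z *m b).
Proof.
move=> dg gL; rewrite dotv_mulmx dotvC trmx_hessxy_mulmx // lerNl -dotvNl.
apply: (derive_le (phi := fun e : E => dotv (- b) e.2)).
- exact: diff_derivable.
- exact: continuous_dotv_snd.
move=> h h0; set D := grad g _ - grad g z.
have -> : (h^-1 *: D).2 = h^-1 *: D.2 by [].
rewrite dotvZr; apply: quotient_le h0 _.
have hD : enormp D <= Lg * (`|h| * enorm a).
  by have := gL (h *: (a, (0 : 'cV[R]_p)) + z) z; rewrite addrK enormpZ enormp_pair0r.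
apply: le_trans (normr_dotv_le _ _) _; rewrite enormN.
rewrite (_ : `|h| * _ = enorm b * (Lg * (`|h| * enorm a))); last by ring.
exact: (ler_wpM2l (enorm_ge0 b) (le_trans (enorm_snd_le D) hD)).
Qed.

End LipschitzDerivatives.

Section CoerciveMatrix.
Variables (R : realType) (p : nat) (H : 'M[R]_p) (mu : R).
Hypotheses (mu_gt0 : 0 < mu) (H_coercive : forall v, mu * dotv v v <= dotv v (H *m v)).

Lemma coercive_unitmx : H \in unitmx.
Proof.
rewrite unitmxE unitfE; apply/negP => /det0P [v v0 vH].
have := H_coercive v^T; rewrite [X in _ <= X]dotvE trmxK mulmxA vH mul0mx mxE.
rewrite pmulr_rle0 // => vv.
by move: v0; rewrite -trmx_eq0 -dotvv_eq0 eq_le vv dotvv_ge0.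
Qed.

Lemma enorm_invmx_mulmx_le (u : 'cV[R]_p) : enorm (invmx H *m u) <= enorm u / mu.
Proof.
set w := invmx H *m u.
have : mu * enorm w ^+ 2 <= enorm w * enorm u.
  rewrite enorm_sqr; apply: le_trans (H_coercive w) _.
  by rewrite /w mulKVmx ?coercive_unitmx // dotv_le_enorm.
have [-> _|w0] := eqVneq (enorm w) 0; first by rewrite divr_ge0 ?enorm_ge0 ?(ltW mu_gt0).
have wp : 0 < enorm w by rewrite lt_def w0 enorm_ge0.
by rewrite ler_pdivlMr // expr2 mulrCA ler_pM2l // mulrC.
Qed.

End CoerciveMatrix.

Lemma dotp_Dshat_Dh_expand (R : realType) n p (a d1 : 'cV[R]_n) (d2 G : 'cV[R]_p)
    (Hxy T3x : 'M[R]_(n, p)) (H Hi T3y : 'M[R]_p) (beta bh : R) :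
  a = d1 - Hxy *m Hi *m d2 ->
  dotp (a, bh *: G)
    (d1 + (- (Hxy *m Hi) + T3x *m Hi) *m d2 + beta *: (Hxy *m G),
     T3y *m Hi *m d2 + beta *: (H *m G))
  = enorm a ^+ 2 + dotv a (T3x *m (Hi *m d2)) + beta * dotv a (Hxy *m G)
    + bh * dotv G (T3y *m (Hi *m d2)) + bh * beta * dotv G (H *m G).
Proof.
move=> Ea.
have -> : d1 + (- (Hxy *m Hi) + T3x *m Hi) *m d2 = a + T3x *m (Hi *m d2).
  by rewrite Ea mulmxDl mulNmx !mulmxA addrA.
rewrite /dotp /= !dotvDr !dotvZr !dotvZl enorm_sqr !mulmxA; ring.
Qed.

Lemma has_ubound_dotp_Dh (R : realType) n p (g : 'cV[R]_n * 'cV[R]_p -> R)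
    (Df : 'cV[R]_n * 'cV[R]_p -> set ('cV[R]_n * 'cV[R]_p)) (Mf beta : R) x y w :
  (forall z v, Df z v -> enormp v <= Mf) ->
  has_ubound [set dotp w z | z in Dh g Df beta x y].
Proof.
move=> Df_bd.
set c := (beta *: (hessxy g (x, y) *m grady g (x, y)),
          beta *: (hessyy g (x, y) *m grady g (x, y))).
set K := enorm w.1 + enorm ((JAx g x y)^T *m w.1) + enorm ((JAy g x y)^T *m w.2).
exists (K * Mf + dotp w c) => _ [_ [d dD <-] <-].
apply: le_trans (dotp_affine_le w _ _ c d) _.
rewrite lerD2r; apply: ler_wpM2l; last exact: Df_bd dD.
by rewrite /K !addr_ge0 ?enorm_ge0.
Qed.

Lemma min_coef_mul_le (R : realType) (beta bh A B : R) : 0 < bh ->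
  Num.min (1 / 4) (beta ^+ 2 / (16 * bh ^+ 2)) * (A ^+ 2 + bh ^+ 2 * B ^+ 2)
  <= A ^+ 2 / 4 + beta ^+ 2 / 16 * B ^+ 2.
Proof.
move=> bh0; set c := Num.min _ _.
have c1 : c <= 1 / 4 by rewrite ge_min lexx.
have c2 : c * bh ^+ 2 <= beta ^+ 2 / 16.
  have E : beta ^+ 2 / (16 * bh ^+ 2) * bh ^+ 2 = beta ^+ 2 / 16.
    by field; rewrite gt_eqF.
  by rewrite -E ler_pM2r ?exprn_gt0 // ge_min lexx orbT.
rewrite mulrDr mulrA; apply: lerD.
  by have := sqr_ge0 A; nra.
by have := sqr_ge0 B; nra.
Qed.

Lemma quadratic_lower_bound (R : realType) (A B mu Lg K beta bh t2 t3 t4 t5 : R) :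
  0 <= A -> 0 <= B -> 0 < mu -> 0 < beta -> 0 < bh ->
  K <= beta * mu / 4 -> 8 * beta * Lg ^+ 2 <= bh * mu ->
  beta <= 4 * bh * mu -> beta * mu <= 4 * bh ->
  - (K * (A * B)) <= t2 -> - (Lg * A * B) <= t3 ->
  - (K * (B * B)) <= t4 -> mu * B ^+ 2 <= t5 ->
  A ^+ 2 / 4 + beta ^+ 2 / 16 * B ^+ 2
  <= A ^+ 2 + t2 + beta * t3 + bh * t4 + bh * beta * t5.
Proof.
move=> A0 B0 mu0 beta0 bh0 hK f1 f2 f3 h2 h3 h4 h5.
have g2 : - (beta * mu / 4 * (A * B)) <= t2.
  by apply: le_trans h2; rewrite lerN2 ler_wpM2r ?mulr_ge0.
have g3 : - (beta * (Lg * A * B)) <= beta * t3 by rewrite -mulrN ler_pM2l.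
have g4 : - (bh * (beta * mu / 4 * (B * B))) <= bh * t4.
  by rewrite -mulrN ler_pM2l //; apply: le_trans h4; rewrite lerN2 ler_wpM2r ?mulr_ge0.
have g5 : bh * beta * (mu * B ^+ 2) <= bh * beta * t5 by rewrite ler_pM2l ?mulr_gt0.
(* Young's inequality absorbs the cross term [C * (A * B)]. *)
set C := beta * (mu / 4 + Lg).
have q1 : C * (A * B) <= A ^+ 2 / 2 + C ^+ 2 / 2 * B ^+ 2.
  by have := sqr_ge0 (A - C * B); nra.
have q2 : C ^+ 2 <= 2 * beta ^+ 2 * (mu ^+ 2 / 16 + Lg ^+ 2).
  by rewrite /C; have := sqr_ge0 (mu / 4 - Lg); have := sqr_ge0 beta; nra.
have q3 : beta ^+ 2 / 16 + beta ^+ 2 * (mu ^+ 2 / 16 + Lg ^+ 2) <= 3 / 4 * bh * beta * mu.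
  have := ler_wpM2l (ltW beta0) f1; have := ler_wpM2l (ltW beta0) f2.
  have := ler_wpM2l (ltW (mulr_gt0 beta0 mu0)) f3; nra.
have q4 : (beta ^+ 2 / 16 + C ^+ 2 / 2) * B ^+ 2 <= 3 / 4 * bh * beta * mu * B ^+ 2.
  by apply: ler_wpM2r; rewrite ?sqr_ge0 //; lra.
rewrite /C in q1 q4; nra.
Qed.

Section StepSizes.
Variables (R : realType) (Qg Mf mu Lg beta bh : R).
Hypotheses (Qg_gt0 : 0 < Qg) (Mf_gt0 : 0 < Mf) (mu_gt0 : 0 < mu).
Hypothesis beta_ge : 4 * Qg * Mf / mu ^+ 3 <= beta.
Hypothesis bh_ge : beta * Num.max (8 * Lg ^+ 2 / mu) (Num.max (1 / (4 * mu)) (mu / 4)) <= bh.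

Lemma beta_gt0 : 0 < beta.
Proof. by apply: lt_le_trans beta_ge; rewrite !mulr_gt0 ?invr_gt0 ?exprn_gt0. Qed.

Lemma third_order_coef_le : Qg * Mf / mu ^+ 2 <= beta * mu / 4.
Proof.
have -> : Qg * Mf / mu ^+ 2 = 4 * Qg * Mf / mu ^+ 3 * mu / 4 by field; rewrite gt_eqF.
by rewrite ler_pM2r ?invr_gt0 // ler_pM2r.
Qed.

Lemma bh_mu_ge_beta_Lg : 8 * beta * Lg ^+ 2 <= bh * mu.
Proof.
have -> : 8 * beta * Lg ^+ 2 = beta * (8 * Lg ^+ 2 / mu) * mu by field; rewrite gt_eqF.
by rewrite ler_pM2r //; apply: le_trans bh_ge; rewrite ler_pM2l ?beta_gt0 // le_max lexx.
Qed.

Lemma beta_le_bh_mu : beta <= 4 * bh * mu.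
Proof.
have -> : beta = beta * (1 / (4 * mu)) * (4 * mu) by field; rewrite gt_eqF.
rewrite [4 * bh * mu](_ : _ = bh * (4 * mu)); last by ring.
rewrite ler_pM2r ?mulr_gt0 //.
by apply: le_trans bh_ge; rewrite ler_pM2l ?beta_gt0 // !le_max lexx orbT.
Qed.

Lemma beta_mu_le_bh : beta * mu <= 4 * bh.
Proof.
have -> : beta * mu = beta * (mu / 4) * 4 by field.
rewrite [4 * bh]mulrC ler_pM2r //.
by apply: le_trans bh_ge; rewrite ler_pM2l ?beta_gt0 // !le_max lexx !orbT.
Qed.

Lemma bh_gt0 : 0 < bh.
Proof. by have := beta_mu_le_bh; have := mulr_gt0 beta_gt0 mu_gt0; lra. Qed.

Lemma pairing_lower_bound (A B t2 t3 t4 t5 : R) :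
  0 <= A -> 0 <= B ->
  - (Qg * (B / mu) * (A * (Mf / mu))) <= t2 -> - (Lg * A * B) <= t3 ->
  - (Qg * (B / mu) * (B * (Mf / mu))) <= t4 -> mu * B ^+ 2 <= t5 ->
  Num.min (1 / 4) (beta ^+ 2 / (16 * bh ^+ 2)) * (A ^+ 2 + bh ^+ 2 * B ^+ 2)
  <= A ^+ 2 + t2 + beta * t3 + bh * t4 + bh * beta * t5.
Proof.
move=> A0 B0 h2 h3 h4 h5.
have E C D : Qg * (C / mu) * (D * (Mf / mu)) = Qg * Mf / mu ^+ 2 * (D * C).
  by field; rewrite gt_eqF.
rewrite E in h2; rewrite E in h4.
apply: le_trans (min_coef_mul_le _ _ _ bh_gt0) _.
exact: (quadratic_lower_bound A0 B0 mu_gt0 beta_gt0 bh_gt0 third_order_coef_le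
  bh_mu_ge_beta_Lg beta_le_bh_mu beta_mu_le_bh h2 h3 h4 h5).
Qed.

End StepSizes.

Unset Implicit Arguments.
Set Strict Implicit.

Theorem proposition4p6 (R : realType) (n p : nat)
  (f g : 'cV[R]_n * 'cV[R]_p -> R)
  (Df : 'cV[R]_n * 'cV[R]_p -> set ('cV[R]_n * 'cV[R]_p))
  (Mf mu Lg Qg beta betahat : R) :
  0 < Mf -> 0 < mu -> 0 < Lg -> 0 < Qg ->
  (* (A1) *)
  (forall z1 z2, `|f z1 - f z2| <= Mf * enormp (z1 - z2)) ->
  (forall z, differentiable g z) ->
  (forall z, differentiable (grad g) z) ->
  (forall z (v : 'cV[R]_p), mu * dotv v v <= dotv v (hessyy g z *m v)) ->
  (forall z1 z2, enormp (grad g z1 - grad g z2) <= Lg * enormp (z1 - z2)) ->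
  (forall z1 z2, opnorm (hessyy g z1 - hessyy g z2) <= Qg * enormp (z1 - z2)) ->
  (forall z1 z2, opnorm (hessxy g z1 - hessxy g z2) <= Qg * enormp (z1 - z2)) ->
  (forall z, differentiable (hessyy g) z) ->
  (forall v, continuous (fun z => 'D_v (hessyy g) z)) ->
  (* (A2) *)
  conservative_potential Df f ->
  (forall z, forall u v, Df z u -> Df z v -> forall t : R, 0 <= t <= 1 ->
     Df z (t *: u + (1 - t) *: v)) ->
  (forall z v, Df z v -> enormp v <= Mf) ->
  (* parameters *)
  4 * Qg * Mf / mu ^+ 3 <= beta ->
  beta * Num.max (8 * Lg ^+ 2 / mu) (Num.max (1 / (4 * mu)) (mu / 4)) <= betahat ->
  forall (x : 'cV[R]_n) (y : 'cV[R]_p) (w : 'cV[R]_n * 'cV[R]_p),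
    Dshat g Df betahat x y w ->
    sup [set dotp w z | z in Dh g Df beta x y]
      >= Num.min (1 / 4) (beta ^+ 2 / (16 * betahat ^+ 2)) * enormp w ^+ 2.
Proof.
move=> Mf_gt0 mu_gt0 _ Qg_gt0 _ _ dgrad H_coercive gradL hyyL hxyL _ _ _ _ Df_bd
  beta_ge bh_ge x y _ [d dD <-].
set G := grady g (x, y).
set Hi := invmx (hessyy g (x, y)).
have zD : Dh g Df beta x y (d.1 + JAx g x y *m d.2 + beta *: (hessxy g (x, y) *m G),
                            JAy g x y *m d.2 + beta *: (hessyy g (x, y) *m G)).
  by exists d.
apply: le_trans (ub_le_sup (has_ubound_dotp_Dh _ _ _ _ _ Df_bd) (imageP _ zD)).
rewrite /JAx /JAy /= dotp_Dshat_Dh_expand // enormp_sqr /= enormZ exprMn real_normK ?num_real //.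
have HiG : enorm (Hi *m G) <= enorm G / mu.
  exact: (enorm_invmx_mulmx_le mu_gt0 (H_coercive (x, y))).
have Hid : enorm (Hi *m d.2) <= Mf / mu.
  apply: le_trans (enorm_invmx_mulmx_le mu_gt0 (H_coercive (x, y)) _) _.
  by rewrite ler_pM2r ?invr_gt0 //; exact: le_trans (enorm_snd_le d) (Df_bd _ _ dD).
apply: (pairing_lower_bound Qg_gt0 Mf_gt0 mu_gt0 beta_ge bh_ge (enorm_ge0 _) (enorm_ge0 _)).
- exact: dotv_derive_mx_ge (ltW Qg_gt0) hxyL HiG Hid.
- exact: dotv_hessxy_ge (dgrad _) gradL.
- exact: dotv_derive_mx_ge (ltW Qg_gt0) hyyL HiG Hid.
- by rewrite enorm_sqr H_coercive.
Qed.
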